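(* Let $a,b$ be integers with $0<b<a$, let $S=\langle a,a+1,\ldots,a+b\rangle$ with conductor $c$, and let $m\ge 2c-1$. Let $M$ be an $(S,m,r)$-amenable set whose shadow $L_M$ is not the whole ground. Then there exists an $(S,m,r)$-amenable set $N$ whose shadow $L_N$ does not contain $m+a+b-1$ and satisfies $\sharp L_N\le\sharp L_M$.
   Context: For $x\in S$, $\mathrm D(x)=\{\alpha\in S\mid x-\alpha\in S\}$. A set $M=\{m_1<\cdots<m_r\}\subseteq S$ with $2c-1\le m=m_1$ is $(S,m,r)$-amenable if $\mathrm D(m_i)\cap[m,\infty)\subseteq M$ for all $i$. The ground is $\{m,m+1,\ldots,m+a+b-1\}$, and the shadow of $M$ is $M\cap\{m,\ldots,m+a+b-1\}$. *)

From mathcomp Require Import all_boot.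
Set Implicit Arguments. Unset Strict Implicit. Unset Printing Implicit Defensive.

Definition inS (a b n : nat) : Prop :=
  exists s : seq nat, all (fun g => a <= g <= a + b) s /\ sumn s = n.

Definition is_conductor (a b c : nat) : Prop :=
  (forall n, c <= n -> inS a b n) /\
  (forall c', (forall n, c' <= n -> inS a b n) -> c <= c').

(* alpha \in D(x) = { alpha in S | x - alpha in S } (integer difference, so
   alpha <= x is required since S is a subset of N). *)
Definition inD (a b x alpha : nat) : Prop :=
  inS a b alpha /\ alpha <= x /\ inS a b (x - alpha).

(* M = {m_1 < ... < m_r} subset of S, m = m_1, 2c-1 <= m, and
   D(m_i) cap [m, oo) subset M for all i. M is given as its increasing
   enumeration. *)
Definition amenable (a b c m r : nat) (M : seq nat) : Prop :=
  sorted ltn M /\ size M = r /\ 0 < r /\ nth 0 M 0 = m /\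
  (forall x, x \in M -> inS a b x) /\
  (2 * c).-1 <= m /\
  (forall x alpha, x \in M -> inD a b x alpha -> m <= alpha -> alpha \in M).

Definition ground (a b m : nat) : seq nat := iota m (a + b).

Definition shadow (a b m : nat) (M : seq nat) : seq nat :=
  [seq x <- M | x \in ground a b m].

From mathcomp Require Import all_boot.
From mathcomp Require Import zify.

(* Let h be the largest element of the ground missing from M and
   t = m + a + b - 1 - h.  Shift M up by t and fill in m, ..., m + t - 1; the
   first r elements N of the result form an amenable set, because S contains
   every integer >= m: an alpha >= m + t in D(x + t) comes from alpha - t in
   D(x).  The shift moves the gap h to the last ground position, and the t
   elements of M above h in the ground are traded for the t filled-in ones, so
   the shadow does not grow. *)

Set Implicit Arguments.
Unset Strict Implicit.
Unset Printing Implicit Defensive.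

Lemma mem_take_sorted_ltn (s : seq nat) (k x y : nat) :
  sorted ltn s -> x \in take k s -> y \in s -> y <= x -> y \in take k s.
Proof.
move=> sorted_s x_take y_s le_yx.
have : pairwise ltn (take k s ++ drop k s).
  by rewrite cat_take_drop -sorted_pairwise //; exact: ltn_trans.
rewrite pairwise_cat => /andP[/allrelP take_lt_drop _].
move: y_s; rewrite -{1}(cat_take_drop k s) mem_cat => /orP[// | y_drop].
by have := take_lt_drop x y x_take y_drop; lia.
Qed.

Lemma sorted_ltn_head_min (M : seq nat) (x : nat) :
  sorted ltn M -> x \in M -> nth 0 M 0 <= x.
Proof.
case: M => // y M /= path_yM; rewrite inE => /orP[/eqP -> // | x_M].
by apply: ltnW; apply: (allP (order_path_min ltn_trans path_yM)).
Qed.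

Lemma amenable_ge_head (a b c m r : nat) (M : seq nat) :
  amenable a b c m r M -> {in M, forall y, m <= y}.
Proof.
by case=> sorted_M [_ [_ [head_M _]]] y y_M; rewrite -head_M sorted_ltn_head_min.
Qed.

Lemma last_gap (m n : nat) (M : seq nat) :
  ~ {subset iota m n <= M} ->
  exists h, [/\ m <= h < m + n, h \notin M &
                forall y, h < y < m + n -> y \in M].
Proof.
move=> not_sub.
have gap : exists i, (i \in iota m n) && (i \notin M).
  have /allPn [i i_iota i_notM] : ~~ all (mem M) (iota m n).
    by apply/negP => /allP.
  by exists i; rewrite i_iota.
have gap_bound i : (i \in iota m n) && (i \notin M) -> i <= m + n.
  by rewrite mem_iota => /andP[]; lia.
case: (ex_maxnP gap gap_bound) => h /andP[h_iota h_notM] h_max.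
move: h_iota; rewrite mem_iota => h_range.
exists h; split => //.
move=> y /andP[lt_hy lt_y]; apply/negPn/negP => y_notM.
by have := h_max y; rewrite mem_iota y_notM andbT; lia.
Qed.

Definition pad_shift (m t : nat) (M : seq nat) : seq nat :=
  iota m t ++ map (addn t) M.

Lemma mem_pad_shift (m t x : nat) (M : seq nat) :
  (x \in pad_shift m t M) = (m <= x < m + t) || (x \in map (addn t) M).
Proof. by rewrite mem_cat mem_iota. Qed.

Lemma size_pad_shift (m t : nat) (M : seq nat) :
  size (pad_shift m t M) = t + size M.
Proof. by rewrite size_cat size_iota size_map. Qed.

Lemma nth0_pad_shift (m t : nat) (M : seq nat) :
  nth 0 M 0 = m -> nth 0 (pad_shift m t M) 0 = m.
Proof.
case: t => [|t] head_M; last by rewrite nth_cat size_iota.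
by rewrite /pad_shift /= (eq_map (g := id) add0n) map_id.
Qed.

Lemma pad_shift_ge (m t x : nat) (M : seq nat) :
  {in M, forall y, m <= y} -> x \in pad_shift m t M -> m <= x.
Proof.
move=> M_ge; rewrite mem_pad_shift => /orP[/andP[] // | /mapP[y y_M ->]].
by have := M_ge y y_M; lia.
Qed.

Lemma sorted_pad_shift (m t : nat) (M : seq nat) :
  sorted ltn M -> {in M, forall y, m <= y} -> sorted ltn (pad_shift m t M).
Proof.
move=> sorted_M M_ge.
rewrite sorted_pairwise; last exact: ltn_trans.
rewrite pairwise_cat; apply/and3P; split.
- apply/allrelP => x _ /[!mem_iota] x_iota /mapP[y y_M ->].
  by have := M_ge y y_M; lia.
- by rewrite -sorted_pairwise ?iota_ltn_sorted //; exact: ltn_trans.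
- rewrite pairwise_map; apply: sub_pairwise (_ : pairwise ltn M) => [x y /= |].
    by rewrite ltn_add2l.
  by rewrite -sorted_pairwise //; exact: ltn_trans.
Qed.

Definition D_closed (a b m : nat) (M : seq nat) : Prop :=
  forall x alpha, x \in M -> inD a b x alpha -> m <= alpha -> alpha \in M.

Lemma D_closed_take (a b m k : nat) (s : seq nat) :
  sorted ltn s -> D_closed a b m s -> D_closed a b m (take k s).
Proof.
move=> sorted_s closed_s x alpha x_take D_alpha le_m_alpha.
apply: (mem_take_sorted_ltn sorted_s x_take); last by case: D_alpha => _ [].
exact: closed_s (mem_take x_take) D_alpha le_m_alpha.
Qed.

Lemma D_closed_pad_shift (a b m t : nat) (M : seq nat) :
  (forall n, m <= n -> inS a b n) ->
  D_closed a b m M -> D_closed a b m (pad_shift m t M).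
Proof.
move=> S_ge_m closed_M x alpha x_pad [_ [le_alpha_x S_x_alpha]] le_m_alpha.
rewrite mem_pad_shift; case: (ltnP alpha (m + t)) => [lt_alpha | le_alpha].
  by apply/orP; left; apply/andP.
have [y y_M x_eq] : exists2 y, y \in M & x = t + y.
  by move: x_pad; rewrite mem_pad_shift => /orP[| /mapP //]; lia.
have alpha_D_y : inD a b y (alpha - t).
  split; first by apply: S_ge_m; lia.
  by split; [lia | have -> : y - (alpha - t) = x - alpha by lia].
apply/orP; right; apply/mapP; exists (alpha - t); last lia.
by apply: closed_M alpha_D_y _; lia.
Qed.

Lemma amenable_take_pad_shift (a b c m r t : nat) (M : seq nat) :
  (forall n, c <= n -> inS a b n) -> amenable a b c m r M ->
  amenable a b c m r (take r (pad_shift m t M)).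
Proof.
move=> S_ge_c amenable_M; have M_ge := amenable_ge_head amenable_M.
case: amenable_M => sorted_M [size_M [r_gt0 [head_M [_ [le_c_m closed_M]]]]].
have S_ge_m n : m <= n -> inS a b n by move=> le_mn; apply: S_ge_c; lia.
have sorted_pad := sorted_pad_shift t sorted_M M_ge.
split; first by rewrite (subseq_sorted ltn_trans (take_subseq _ r)).
split; first by rewrite size_takel // size_pad_shift size_M leq_addl.
split=> //; split; first by rewrite nth_take // nth0_pad_shift.
split; first by move=> x /mem_take /(pad_shift_ge M_ge) /S_ge_m.
split=> //.
exact/D_closed_take/D_closed_pad_shift.
Qed.

Section LastGap.

Variables (m n h : nat) (M : seq nat).
Hypotheses (M_ge : {in M, forall y, m <= y}) (h_range : m <= h < m + n)
  (h_notM : h \notin M).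

Let t := (m + n).-1 - h.

Lemma last_gap_notin_pad_shift : (m + n).-1 \notin pad_shift m t M.
Proof.
rewrite mem_pad_shift negb_or; apply/andP; split; first lia.
by apply: contra h_notM => /mapP[y y_M y_eq]; have -> : h = y by lia.
Qed.

Hypotheses (uniq_M : uniq M) (top_M : forall y, h < y < m + n -> y \in M).

Lemma count_window_pad_shift_le :
  count (mem (iota m n)) (pad_shift m t M) <= count (mem (iota m n)) M.
Proof.
have count_pad : count (mem (iota m n)) (iota m t) = t.
  rewrite (eq_in_count (a2 := predT)) ?count_predT ?size_iota //.
  by move=> x /[!mem_iota] x_range /=; rewrite mem_iota; lia.
have count_shift : count (mem (iota m n)) (map (addn t) M) =
                   count [pred x | (x < h) && (x \in iota m n)] M.
  rewrite count_map; apply: eq_in_count => x x_M /=; rewrite !mem_iota.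
  have := M_ge x_M; have : x != h by apply: contraNneq h_notM => <-.
  lia.
have top_count : t <= count [pred x | (x >= h) && (x \in iota m n)] M.
  rewrite -size_filter -[t](size_iota h.+1); apply: uniq_leq_size.
    exact: iota_uniq.
  move=> y /[!mem_iota] y_range; rewrite mem_filter /= mem_iota top_M; lia.
have split_M : count (mem (iota m n)) M =
    count [pred x | (x < h) && (x \in iota m n)] M +
    count [pred x | (x >= h) && (x \in iota m n)] M.
  rewrite -size_filter -(count_predC [pred x | x < h]) !count_filter.
  by congr (_ + _); apply: eq_count => x /=; rewrite // -leqNgt.
by rewrite count_cat count_pad count_shift split_M addnC leq_add2l.
Qed.

End LastGap.

Theorem proposition4p24 (a b c m r : nat) (M : seq nat) :
  0 < b -> b < a -> is_conductor a b c -> (2 * c).-1 <= m ->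
  amenable a b c m r M ->
  ~ {subset ground a b m <= shadow a b m M} ->
  exists N : seq nat, [/\ amenable a b c m r N,
    (m + a + b).-1 \notin shadow a b m N &
    size (shadow a b m N) <= size (shadow a b m M)].
Proof.
move=> _ _ [S_ge_c _] _ amenable_M not_sub.
have M_ge := amenable_ge_head amenable_M.
have uniq_M : uniq M by case: amenable_M => /(sorted_uniq ltn_trans ltnn).
have not_sub_M : ~ {subset iota m (a + b) <= M}.
  by move=> sub; apply: not_sub => x x_ground; rewrite mem_filter x_ground sub.
have [h [h_range h_notM top_M]] := last_gap not_sub_M.
set t := (m + (a + b)).-1 - h.
exists (take r (pad_shift m t M)); split.
- exact: amenable_take_pad_shift.
- rewrite mem_filter negb_and -addnA; apply/orP; right.
  apply/negP => /mem_take; apply/negP.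
  exact: last_gap_notin_pad_shift.
- rewrite /shadow !size_filter.
  apply: leq_trans (count_window_pad_shift_le M_ge h_range h_notM uniq_M top_M).
  exact/leq_count_subseq/take_subseq.
Qed.
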